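(* Let $n,k$ be positive integers and $i\in\{1,\ldots,n\}$ such that $k\cdot\frac{i}{n}\cdot \frac{n-i}{n}< 1$, $n\ge 8k$, and $i>n/2$. If $H\sim\text{Hyp}(n,i,k)$, then $\mathbb{P}(H \ge ik/n) \ge \frac{k}{n}$.
   Context: $\text{Hyp}(n,i,k)$ denotes the hypergeometric distribution: the number of black marbles in a sample without replacement of size $k$ from an urn with $i$ black and $n-i$ white marbles, i.e. $\mathbb{P}(H=j)=\binom{i}{j}\binom{n-i}{k-j}/\binom{n}{k}$. *)

From mathcomp Require Import all_boot all_order all_algebra.
Set Implicit Arguments. Unset Strict Implicit. Unset Printing Implicit Defensive.
Import Order.TTheory GRing.Theory Num.Theory.
Local Open Scope ring_scope.

(* P(H = j) for H ~ Hyp(n,i,k): C(i,j) C(n-i,k-j) / C(n,k), as a rational.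
   ('C(a,b) = 0 when b > a; note k - j is truncated but j ranges over 0..k.) *)
Definition hyp_pmf (n i k j : nat) : rat :=
  ('C(i, j) * 'C(n - i, k - j))%:R / ('C(n, k))%:R.

Definition hyp_tail (n i k : nat) (x : rat) : rat :=
  \sum_(0 <= j < k.+1 | x <= j%:R) hyp_pmf n i k j.

(* Write w = n - i and m = k - 1.  Each factor (i - t)/(n - t), t < k, of
   P(H = k) = C(i,k)/C(n,k) is at least 1 - x with x = w/(n - m), so
   P(H = k) >= (1 - x)^k, and P(H = k - 1) = P(H = k) k w/(i - m).
   Since k/n <= 1/8 it suffices to bound the tail from below by 1/8.
   If k w < n, the threshold ik/n = k - kw/n exceeds k - 1, only P(H = k)
   is available, and n >= 8k gives k x <= 8/7, whence
   P(H = k) >= (1 - 8/(7k))^k >= (3/7)^2 for k >= 2 (for k = 1 it is i/n).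
   If k w >= n, the threshold is at most k - 1, and the variance hypothesis
   with i > n/2 gives k w < 2n, hence k x <= 16/7 and
   P(H = k) + P(H = k - 1) >= (1 - x)^m (1 + m x) >= 1/8.
   The last two estimates compare with the approximants (1 - b/N)^N of
   exp(-b), which increase with N by AM-GM. *)

From mathcomp Require Import all_boot all_order all_algebra.
From mathcomp Require Import ring lra zify.
Import Order.TTheory GRing.Theory Num.Theory.
Local Open Scope ring_scope.
Set Implicit Arguments. Unset Strict Implicit. Unset Printing Implicit Defensive.

Section ExpApproximants.
Variable R : realFieldType.
Implicit Types b x y : R.

Lemma bernoulli_ineq x (n : nat) : -1 <= x -> 1 + n%:R * x <= (1 + x) ^+ n.
Proof.
move=> x_ge; elim: n => [|n IH]; first by rewrite mul0r addr0 expr0.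
have x1_ge0 : 0 <= 1 + x by lra.
rewrite exprS; apply: le_trans (ler_wpM2l x1_ge0 IH).
have : 0 <= n%:R * x ^+ 2 by rewrite mulr_ge0 ?sqr_ge0.
by rewrite -natr1; lra.
Qed.

Definition exp_approx b (N : nat) : R := (1 - b / N%:R) ^+ N.

(* AM-GM for N copies of 1 - b/N and one copy of 1. *)
Lemma exp_approxS b (N : nat) : (0 < N)%N -> 0 <= b <= N%:R ->
  exp_approx b N <= exp_approx b N.+1.
Proof.
move=> N_gt0 /andP[b_ge0 b_le]; rewrite /exp_approx.
pose E (j : 'I_N.+1) := if j == ord_max then 1 else 1 - b / N%:R.
have E_ge0 j : j \in predT -> 0 <= E j.
  by rewrite /E; case: eqP => // _ _; rewrite subr_ge0 ler_pdivrMr ?ltr0n ?mul1r.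
have EN (j : 'I_N) : E (widen_ord (leqnSn N) j) = 1 - b / N%:R.
  by rewrite /E eqE /= ltn_eqF.
have := (leif_AGM E_ge0).1; rewrite cardE size_enum_ord !big_ord_recr /=.
rewrite (eq_bigr _ (fun j _ => EN j)) (eq_bigr _ (fun j _ => EN j)).
rewrite prodr_const sumr_const card_ord /E eqxx mulr1.
rewrite (_ : (_ *+ N + 1) / _ = 1 - b / N.+1%:R) // -mulr_natr -natr1.
by field; rewrite natr1 !pnatr_eq0 /= -lt0n.
Qed.

Lemma exp_approx_homo b (N0 N : nat) : (0 < N0)%N -> 0 <= b <= N0%:R ->
  (N0 <= N)%N -> exp_approx b N0 <= exp_approx b N.
Proof.
move=> N0_gt0 /andP[b_ge0 b_le] /subnK <-; elim: (N - N0)%N => [|d IH] //=.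
apply: le_trans IH (exp_approxS _ _); first by rewrite addn_gt0 N0_gt0 orbT.
by rewrite b_ge0 (le_trans b_le) // ler_nat leq_addl.
Qed.

Lemma one_subX_one_addM_antitone (m : nat) x y : 0 <= x <= y -> y < 1 ->
  (1 - y) ^+ m * (1 + m%:R * y) <= (1 - x) ^+ m * (1 + m%:R * x).
Proof.
move=> /andP[x_ge0 x_le_y] y_lt1; have y_ge0 := le_trans x_ge0 x_le_y.
have [h h_ge0 hy] : exists2 h, 0 <= h & h * (1 - y) = y - x.
  have y1_gt0 : 0 < 1 - y by rewrite subr_gt0.
  exists ((y - x) / (1 - y)); last by rewrite divfK ?gt_eqF.
  by rewrite divr_ge0 ?subr_ge0 // ltW.
have -> : 1 - x = (1 - y) * (1 + h) by lra.
rewrite exprMn -mulrA; apply: ler_wpM2l; first by rewrite exprn_ge0 // subr_ge0 ltW.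
have x1_ge0 : 0 <= 1 + m%:R * x by rewrite addr_ge0 ?mulr_ge0.
have bern : 1 + m%:R * h <= (1 + h) ^+ m by apply: bernoulli_ineq; lra.
apply: le_trans (ler_wpM2r x1_ge0 bern).
have := mulr_ge0 (mulr_ge0 (ler0n R m) h_ge0) y_ge0.
have := mulr_ge0 (mulr_ge0 (mulr_ge0 (ler0n R m) (ler0n R m)) h_ge0) x_ge0.
have : m%:R * (h * (1 - y)) = m%:R * (y - x) by rewrite hy.
lra.
Qed.

Lemma one_subX_ge_inv8 (k : nat) x : (2 <= k)%N -> 0 <= x -> k%:R * x <= 8 / 7 ->
  1 / 8 <= (1 - x) ^+ k.
Proof.
move=> k_ge2 x_ge0 kx_le.
have k_gt0 : 0 < k%:R :> R by rewrite ltr0n (leq_trans _ k_ge2).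
have x_le : x <= 8 / 7 / k%:R by rewrite ler_pdivlMr // mulrC.
have b_le : 8 / 7 <= k%:R :> R by apply: le_trans (_ : 2%:R <= _); rewrite ?ler_nat //; lra.
apply: (@le_trans _ _ (exp_approx (8 / 7) k)).
  apply: le_trans (exp_approx_homo (N0 := 2) _ _ k_ge2) => //.
    by rewrite /exp_approx; lra.
  by apply/andP; split; lra.
have b_k : 8 / 7 / k%:R <= 1 :> R by rewrite ler_pdivrMr // mul1r.
by apply: lerXn2r; rewrite ?nnegrE; lra.
Qed.

Lemma one_subX_one_addM_ge_inv8 (m : nat) x : (2 <= m)%N -> 0 <= x ->
  m.+1%:R * x <= 16 / 7 -> 1 / 8 <= (1 - x) ^+ m * (1 + m%:R * x).
Proof.
move=> m_ge2 x_ge0 kx_le.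
have k_ge3 : 3%:R <= m.+1%:R :> R by rewrite ler_nat.
have k_gt0 : 0 < m.+1%:R :> R by rewrite ltr0n.
pose x0 : R := 16 / 7 / m.+1%:R.
have x0_lt1 : x0 < 1 by rewrite /x0 ltr_pdivrMr // mul1r; lra.
have x_le : x <= x0 by rewrite /x0 ler_pdivlMr // mulrC.
have x_range : 0 <= x <= x0 by rewrite x_ge0.
apply: le_trans (one_subX_one_addM_antitone m x_range x0_lt1).
have mx0 : m%:R * x0 = 16 / 7 - x0.
  by rewrite /x0 -natr1; field; rewrite addrC natr1 pnatr_eq0.
rewrite mx0 /x0; clear -m_ge2.
case: m m_ge2 => [|[|[|[|m]]]] //= _; [lra | lra |].
have k_ge5 : (5 <= m.+4.+1)%N by [].
have k_ge : 5%:R <= m.+4.+1%:R :> R by rewrite ler_nat.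
have u_le : 16 / 7 / m.+4.+1%:R <= 16 / 7 / 5 :> R.
  by rewrite ler_pdivrMr ?(lt_le_trans _ k_ge) // mulrAC ler_pdivlMr //; lra.
have approx5 := @exp_approx_homo (16 / 7) 5 _ isT _ k_ge5.
rewrite /exp_approx in approx5.
set u := 16 / 7 / _ in approx5 u_le *.
have u_ge0 : 0 <= u by rewrite /u divr_ge0 //; lra.
have approx : (1 - 16 / 7 / 5) ^+ 5 <= (1 - u) ^+ m.+4.
  apply: le_trans (approx5 _) _; first by apply/andP; split; lra.
  by rewrite exprS ler_piMl ?exprn_ge0; lra.
by apply: le_trans (ler_pM _ _ approx (_ : 1 + (16 / 7 - 16 / 7 / 5) <= _)); lra.
Qed.

End ExpApproximants.

Lemma natr_subn_div (F : numFieldType) n i m : (m <= i <= n)%N -> (m < n)%N ->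
  (i - m)%:R / (n - m)%:R = 1 - (n - i)%:R / (n - m)%:R :> F.
Proof.
move=> /andP[le_mi le_in] lt_mn.
have -> : (i - m = (n - m) - (n - i))%N by lia.
by rewrite natrB ?leq_sub2l // mulrBl divff // pnatr_eq0 -lt0n subn_gt0.
Qed.

Lemma bin_mul_expn_le (n i k p q : nat) :
  (forall t, t < k -> p * (n - t) <= q * (i - t))%N ->
  ('C(n, k) * p ^ k <= 'C(i, k) * q ^ k)%N.
Proof.
elim: k => [|k IH] le_pq; first by rewrite !bin0 !expn0.
rewrite -(leq_pmul2l (ltn0Sn k)) !mulnA !mul_bin_left !expnSr.
have E c r s : ((s - k) * c * (r ^ k * r) = c * r ^ k * (r * (s - k)))%N by ring.
by rewrite !E leq_mul ?IH ?le_pq // => t /ltnW; apply: le_pq.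
Qed.

Lemma hyp_pmf_ge0 n i k j : 0 <= hyp_pmf n i k j.
Proof. by rewrite /hyp_pmf divr_ge0. Qed.

Lemma hyp_pmf_top n i k : hyp_pmf n i k k = 'C(i, k)%:R / 'C(n, k)%:R.
Proof. by rewrite /hyp_pmf subnn bin0 muln1. Qed.

Lemma hyp_pmf_top_ge n i k : (i <= n)%N -> (0 < k <= n)%N ->
  ((i - k.-1)%:R / (n - k.-1)%:R) ^+ k <= hyp_pmf n i k k.
Proof.
move=> le_in /andP[k_gt0 le_kn].
have D_gt0 : 0 < ((n - k.-1) ^ k)%:R :> rat by rewrite ltr0n expn_gt0 subn_gt0; lia.
have C_gt0 : 0 < 'C(n, k)%:R :> rat by rewrite ltr0n bin_gt0.
rewrite hyp_pmf_top expr_div_n -!natrX ler_pdivrMr // mulrAC ler_pdivlMr //.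
rewrite -!natrM ler_nat mulnC; apply: bin_mul_expn_le => t lt_tk; nia.
Qed.

Lemma hyp_pmf_pred_top n i k : (0 < k)%N ->
  hyp_pmf n i k k.-1 * (i - k.-1)%:R = hyp_pmf n i k k * (k * (n - i))%:R.
Proof.
case: k => // m _; rewrite /hyp_pmf subSnn bin1 subnn bin0 muln1 /=.
rewrite mulrAC [RHS]mulrAC -!natrM; congr (_%:R / _).
by rewrite mulnAC (mulnC _ (i - m)%N) -mul_bin_left mulnCA mulnA.
Qed.

Lemma hyp_tail_ge_sum n i k j (x : rat) : x <= j%:R ->
  \sum_(j <= l < k.+1) hyp_pmf n i k l <= hyp_tail n i k x.
Proof.
move=> x_le; rewrite /hyp_tail [X in _ <= X]big_mkcond /=.
have tail_ge0 a b : 0 <= \sum_(a <= l < b) (if x <= l%:R then hyp_pmf n i k l else 0).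
  by apply: sumr_ge0 => l _; case: ifP => _; [apply: hyp_pmf_ge0 | apply: lexx].
have [le_jk|lt_kj] := leqP j k.+1; last by rewrite big_geq; [apply: tail_ge0 | apply: ltnW].
rewrite (big_cat_nat (leq0n j) le_jk) /= -[X in X <= _]add0r.
apply: lerD; first exact: tail_ge0.
by apply: ler_sum_nat => l /andP[le_jl _]; rewrite (le_trans x_le) ?ler_nat.
Qed.

Lemma hyp_tail_ge_top n i k (x : rat) : x <= k%:R ->
  hyp_pmf n i k k <= hyp_tail n i k x.
Proof. by move/(hyp_tail_ge_sum n i k); rewrite big_nat1. Qed.

Lemma hyp_tail_ge_top2 n i k (x : rat) : (0 < k)%N -> x <= k.-1%:R ->
  hyp_pmf n i k k + hyp_pmf n i k k.-1 <= hyp_tail n i k x.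
Proof.
move=> k_gt0 /(hyp_tail_ge_sum n i k).
by rewrite big_ltn ?prednK ?ltnS ?leq_pred // big_nat1 addrC.
Qed.

Lemma hyp_pmf_top_ge_inv8 n i k : (0 < k)%N -> (8 * k <= n)%N ->
  (n < 2 * i)%N -> (i <= n)%N -> (k * (n - i) < n)%N -> 1 / 8 <= hyp_pmf n i k k.
Proof.
move=> k_gt0 le_8k_n lt_n_2i le_in kw_lt_n.
have [->|k_neq1] := eqVneq k 1%N.
  have n_gt0 : 0 < n%:R :> rat by rewrite ltr0n; lia.
  have : n%:R < 2 * i%:R :> rat by rewrite -natrM ltr_nat.
  rewrite hyp_pmf_top !bin1 (ler_pdivlMr _ _ n_gt0); lra.
have d_gt0 : 0 < (n - k.-1)%:R :> rat by rewrite ltr0n; lia.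
apply: le_trans (hyp_pmf_top_ge le_in _); last by apply/andP; split; lia.
rewrite natr_subn_div; [|lia|lia]; apply: one_subX_ge_inv8; [lia | exact: divr_ge0 |].
rewrite mulrA (ler_pdivrMr _ _ d_gt0).
have : (7 * (k * (n - i)) <= 8 * (n - k.-1))%N by nia.
rewrite -(ler_nat rat) !natrM; lra.
Qed.

Lemma hyp_pmf_top2_ge_inv8 n i k : (8 * k <= n)%N -> (n < 2 * i)%N -> (i <= n)%N ->
  (n <= k * (n - i))%N -> (k * (n - i) < 2 * n)%N ->
  1 / 8 <= hyp_pmf n i k k + hyp_pmf n i k k.-1.
Proof.
move=> le_8k_n lt_n_2i le_in n_le_kw kw_lt_2n.
have [m km] : exists m, k = m.+1 by exists k.-1; rewrite prednK //; nia.
rewrite km /= in le_8k_n n_le_kw kw_lt_2n *.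
have a_gt0 : 0 < (i - m)%:R :> rat by rewrite ltr0n; lia.
have d_gt0 : 0 < (n - m)%:R :> rat by rewrite ltr0n; lia.
have -> : hyp_pmf n i m.+1 m.+1 + hyp_pmf n i m.+1 m =
    hyp_pmf n i m.+1 m.+1 * (((i - m)%:R + m.+1%:R * (n - i)%:R) / (i - m)%:R).
  rewrite -[hyp_pmf _ _ _ m](mulfK (lt0r_neq0 a_gt0)) (hyp_pmf_pred_top _ _ (ltn0Sn m)).
  by rewrite natrM; field; apply: lt0r_neq0.
apply: le_trans (ler_wpM2r _ (hyp_pmf_top_ge le_in _)); first last.
- by apply/andP; split; lia.
- by rewrite divr_ge0 ?addr_ge0 ?mulr_ge0 ?ler0n.
rewrite /= natr_subn_div; [|lia|lia].
set x := (n - i)%:R / (n - m)%:R.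
have x_lt1 : x < 1 by rewrite (ltr_pdivrMr _ _ d_gt0) mul1r ltr_nat; lia.
have hw : (n - i)%:R = (n - m)%:R * x by rewrite mulrC divfK ?lt0r_neq0.
have ha : (i - m)%:R = (n - m)%:R * (1 - x).
  by rewrite -natr_subn_div; [rewrite mulrC divfK ?lt0r_neq0 | lia | lia].
have -> : (1 - x) ^+ m.+1 * (((i - m)%:R + m.+1%:R * (n - i)%:R) / (i - m)%:R) =
    (1 - x) ^+ m * (1 + m%:R * x).
  by rewrite ha hw exprS -natr1; field; rewrite subr_eq0 !gt_eqF.
apply: one_subX_one_addM_ge_inv8; [nia | exact: divr_ge0 |].
rewrite mulrA (ler_pdivrMr _ _ d_gt0).
have : (7 * (m.+1 * (n - i)) <= 16 * (n - m))%N by nia.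
rewrite -(ler_nat rat) !natrM; lra.
Qed.

Theorem lemma11 (n i k : nat) :
  (0 < n)%N -> (0 < k)%N -> (1 <= i <= n)%N ->
  k%:R * (i%:R / n%:R) * ((n - i)%:R / n%:R) < 1 :> rat ->
  (8 * k <= n)%N ->
  n%:R / 2 < i%:R :> rat ->
  hyp_tail n i k (i%:R * k%:R / n%:R) >= k%:R / n%:R.
Proof.
move=> n_gt0 k_gt0 /andP[_ le_in] var_lt1 le_8k_n half_lt_i.
have nR_gt0 : 0 < n%:R :> rat by rewrite ltr0n.
have lt_n_2i : (n < 2 * i)%N by rewrite -(ltr_nat rat) natrM; lra.
have kiw_lt : (k * i * (n - i) < n * n)%N.
  move: var_lt1; rewrite (_ : _ * _ * _ = (k * i * (n - i))%:R / (n * n)%:R).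
    by rewrite ltr_pdivrMr ?ltr0n ?muln_gt0 ?n_gt0 // mul1r ltr_nat.
  by rewrite !natrM; field; rewrite lt0r_neq0.
have kw_lt_2n : (k * (n - i) < 2 * n)%N by nia.
apply: le_trans (_ : 1 / 8 <= _).
  by rewrite (ler_pdivrMr _ _ nR_gt0); move: le_8k_n; rewrite -(ler_nat rat) natrM; lra.
have threshold_le j : (i * k <= j * n)%N -> i%:R * k%:R / n%:R <= j%:R :> rat.
  by rewrite (ler_pdivrMr _ _ nR_gt0) -!natrM ler_nat.
have [kw_lt_n | n_le_kw] := ltnP (k * (n - i)) n.
  apply: le_trans (hyp_pmf_top_ge_inv8 k_gt0 le_8k_n lt_n_2i le_in kw_lt_n) _.
  by apply/hyp_tail_ge_top/threshold_le; nia.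
apply: le_trans (hyp_pmf_top2_ge_inv8 le_8k_n lt_n_2i le_in n_le_kw kw_lt_2n) _.
by apply/hyp_tail_ge_top2/threshold_le; nia.
Qed.
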